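(* Let $\mathbf x\in\Omega$ and $\mathbf u=g(\mathbf x)$. (i) If $(X_j)_{j\ge1}$ is the $M$-decomposition of $\mathbf x$, then the $M'$-decomposition of $g(\mathbf x)$ is $(g_0(X_j))_{j\ge1}$. (ii) If $(U_j)_{j\ge1}$ is the $M'$-decomposition of $\mathbf u\in\Omega$ and $h(\mathbf u)=\prod_{j\ge1}g_0^{-1}(U_j)$, then the $M$-decomposition of $h(\mathbf u)$ is $(g_0^{-1}(U_j))_{j\ge1}$. (iii) The map $g:\Omega\to\Omega$ is a bijection.
   Context: Let $\Sigma=\{1,\dots,N\}$ with $N\ge4$, and let $\tau,\kappa,\alpha,\gamma\in\Sigma$ be distinct except that $\tau=\alpha$ is allowed. $\Sigma^*$ denotes finite words, $a^k$ the word of $k$ copies of $a$, and $\Omega=\{\omega\kappa^\infty:\omega\in\Sigma^*\}$. Let $\mathcal C_M=\{\tau\gamma^k:k\ge2\}\cup\{\kappa\alpha^k\kappa\gamma:k\ge0\}$ and $\mathcal C_{M'}=\{\kappa\alpha^k\kappa\gamma:k\ge0\}\cup\{\kappa\alpha^k\kappa\gamma\gamma:k\ge0\}\cup\{\tau\gamma\gamma\}$; letters of $\Sigma$ are regarded as one-letter words. The $M$-decomposition of $\mathbf x\in\Omega$ is $\mathbf x=X_1X_2\cdots$ where $X_1$ is the longest prefix of $\mathbf x$ in $\mathcal C_M\cup\Sigma$, and inductively $X_k$ is the longest prefix of $X_kX_{k+1}\cdots$ (the remaining tail) lying in $\mathcal C_M\cup\Sigma$. The $M'$-decomposition is defined the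 same way using $\mathcal C_{M'}\cup\Sigma$. Define the bijection $g_0:\mathcal C_M\cup\Sigma\to\mathcal C_{M'}\cup\Sigma$ by $\tau\gamma^k\mapsto\kappa\alpha^{k-2}\kappa\gamma$ ($k\ge2$), $\kappa\alpha^k\kappa\gamma\mapsto\kappa\alpha^{k-1}\kappa\gamma\gamma$ ($k\ge1$), $\kappa\kappa\gamma\mapsto\tau\gamma\gamma$, $i\mapsto i$ ($i\in\Sigma$). Define $g:\Omega\to\Omega$ by $g(\mathbf x)=\prod_{j\ge1}g_0(X_j)$ (concatenation), where $(X_j)$ is the $M$-decomposition of $\mathbf x$. *)

From mathcomp Require Import all_boot.
From Stdlib Require Import ClassicalEpsilon.
Set Implicit Arguments. Unset Strict Implicit. Unset Printing Implicit Defensive.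

Section Defs.
Variables (N tau kappa alpha gamma : nat).

Definition inSigma (a : nat) : bool := (1 <= a <= N).

Definition inOmega (x : nat -> nat) : Prop :=
  (forall n, inSigma (x n)) /\ exists n0, forall m, n0 <= m -> x m = kappa.

Definition isLetter (w : seq nat) : bool := (size w == 1) && all inSigma w.

Definition isTauGam (w : seq nat) : bool :=
  if w is a :: t then (a == tau) && (2 <= size t) && all (pred1 gamma) t else false.

Definition isKAKG (w : seq nat) : bool :=
  (3 <= size w) && (w == kappa :: nseq (size w - 3) alpha ++ [:: kappa; gamma]).

Definition isKAKGG (w : seq nat) : bool :=
  (4 <= size w) && (w == kappa :: nseq (size w - 4) alpha ++ [:: kappa; gamma; gamma]).

Definition inCMS (w : seq nat) : bool := isTauGam w || isKAKG w || isLetter w.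
Definition inCM'S (w : seq nat) : bool :=
  isKAKG w || isKAKGG w || (w == [:: tau; gamma; gamma]) || isLetter w.

(* g_0 : C_M u Sigma -> C_M' u Sigma (identity outside its domain) *)
Definition g0 (w : seq nat) : seq nat :=
  if isTauGam w then kappa :: nseq (size w - 3) alpha ++ [:: kappa; gamma]
  else if isKAKG w then
    (if 1 <= size w - 3 then kappa :: nseq (size w - 4) alpha ++ [:: kappa; gamma; gamma]
     else [:: tau; gamma; gamma])
  else w.

(* g_0^{-1} : C_M' u Sigma -> C_M u Sigma (identity outside its domain) *)
Definition g0inv (w : seq nat) : seq nat :=
  if isKAKG w then tau :: nseq (size w - 3).+2 gamma
  else if isKAKGG w then kappa :: nseq (size w - 4).+1 alpha ++ [:: kappa; gamma]
  else if w == [:: tau; gamma; gamma] then [:: kappa; kappa; gamma]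
  else w.

End Defs.

Definition pos (X : nat -> seq nat) (j : nat) : nat := \sum_(i < j) size (X i).

Definition isDecomp (P : seq nat -> bool) (x : nat -> nat) (X : nat -> seq nat) : Prop :=
  forall j,
    P (X j) /\
    (forall i, i < size (X j) -> nth 0 (X j) i = x (pos X j + i)) /\
    (forall w, P w -> (forall i, i < size w -> nth 0 w i = x (pos X j + i)) ->
       size w <= size (X j)).

(* infinite concatenation X_1 X_2 ... of nonempty finite words *)
Fixpoint cat_aux (fuel : nat) (X : nat -> seq nat) (j n : nat) : nat :=
  match fuel with
  | 0 => 0
  | fuel'.+1 => if n < size (X j) then nth 0 (X j) n
                else cat_aux fuel' X j.+1 (n - size (X j))
  end.
Definition infconcat (X : nat -> seq nat) : nat -> nat := fun n => cat_aux n.+1 X 0 n.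

Definition decomp (P : seq nat -> bool) (x : nat -> nat) : nat -> seq nat :=
  epsilon (inhabits (fun _ => [::])) (fun X => isDecomp P x X).

Definition g (N tau kappa alpha gamma : nat) (x : nat -> nat) : nat -> nat :=
  infconcat (fun j => g0 tau kappa alpha gamma (decomp (inCMS N tau kappa alpha gamma) x j)).

From mathcomp Require Import all_boot zify.
From Stdlib Require Import ClassicalEpsilon FunctionalExtensionality.
Set Implicit Arguments. Unset Strict Implicit. Unset Printing Implicit Defensive.

(* Whether a block of a greedy parse is longest depends only on the word following it, through
   a few lookahead patterns: a block tau gamma^k of M (resp. kappa alpha^k kappa gamma of M') is
   longest iff the rest does not begin with gamma, the letter tau iff the rest does not begin
   with gamma gamma, the letter kappa iff the rest does not begin with any alpha^m kappa gamma,
   and every other block is always longest. A lookahead pattern cannot overlap a block of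
   length at least two of M or M' (those begin with tau gamma, or with kappa and a letter other
   than gamma), so a word parsed into M-blocks begins with a pattern iff its image under g0
   does. Hence g0 carries the maximality conditions of M onto those of M', which gives (i) and,
   through g0^-1, (ii); (iii) follows from the uniqueness of decompositions, a tail kappa^oo
   being parsed letter by letter. *)

Definition prefix_of (w : seq nat) (t : nat -> nat) : Prop :=
  forall i, i < size w -> nth 0 w i = t i.

(* [wcat w s] is the infinite word [w s]: the default value of [nth] supplies [s]. *)
Definition wcat (w : seq nat) (s : nat -> nat) : nat -> nat :=
  fun n => nth (s (n - size w)) w n.

(* [i + k] rather than [k + i] makes [shift X k 0] convertible to [X k]. *)
Definition shift (X : nat -> seq nat) (k : nat) : nat -> seq nat := fun i => X (i + k).

Definition longest (P : pred (seq nat)) (B : seq nat) (t : nat -> nat) : Prop :=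
  forall w, P w -> prefix_of w t -> size w <= size B.

Lemma prefix_cat u v t :
  prefix_of (u ++ v) t <-> prefix_of u t /\ prefix_of v (fun i => t (size u + i)).
Proof.
split=> [pre | [pu pv] i].
  split=> i lt_i; first by rewrite -pre ?nth_cat ?lt_i // size_cat; lia.
  by rewrite -pre ?nth_cat ?ltnNge ?leq_addr ?addKn // size_cat; lia.
rewrite nth_cat size_cat => lt_i; case: ltnP => [/pu // | ge_i].
by rewrite pv ?subnKC //; lia.
Qed.

Lemma prefix_nseq k a t : prefix_of (nseq k a) t <-> forall i, i < k -> t i = a.
Proof.
rewrite /prefix_of size_nseq.
split=> pre i lt_i; last by rewrite nth_nseq lt_i pre.
by rewrite -pre // nth_nseq lt_i.
Qed.

Lemma prefix_letter a t : prefix_of [:: a] t <-> t 0 = a.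
Proof. by split=> [/(_ 0) <- | <- [|i]]. Qed.

Lemma prefix_wcat w s : prefix_of w (wcat w s).
Proof. by move=> i lt_i; rewrite /wcat (set_nth_default (s (i - size w)) 0). Qed.

Lemma wcat_drop w s i : wcat w s (size w + i) = s i.
Proof. by rewrite /wcat nth_default ?leq_addr // addKn. Qed.

Lemma prefix_wcat_cat w v s : prefix_of (w ++ v) (wcat w s) <-> prefix_of v s.
Proof.
split=> [/prefix_cat[_ pv] i lt_i | pv]; first by rewrite pv // wcat_drop.
by apply/prefix_cat; split=> [|i lt_i]; [exact: prefix_wcat | rewrite wcat_drop pv].
Qed.

Lemma prefix_wcat_letter a b v s :
  prefix_of (b :: v) (wcat [:: a] s) <-> b = a /\ prefix_of v s.
Proof.
split=> [pre | [-> pv]]; last exact/(prefix_wcat_cat [:: a] v s).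
have ba : b = a := pre 0 isT.
by split=> //; move: pre; rewrite ba -cat1s => /prefix_wcat_cat.
Qed.

Lemma longest_ext P B v s :
  longest P B (wcat B s) -> P (B ++ v) -> prefix_of v s -> v = [::].
Proof.
move=> lg Pv /(prefix_wcat_cat B) pv; have := lg _ Pv pv.
by rewrite size_cat => le; apply: size0nil; lia.
Qed.

Lemma cat_aux_shift f X j k n : cat_aux f X (k + j) n = cat_aux f (shift X j) k n.
Proof. by elim: f k n => [|f IH] k n //=; rewrite -addSn IH. Qed.

Lemma cat_aux_fuel X : (forall j, 0 < size (X j)) ->
  forall f f' j n, n < f -> n < f' -> cat_aux f X j n = cat_aux f' X j n.
Proof.
move=> ne; elim=> [|f IH] [|f'] j n //= lt_f lt_f'.
case: ltnP => // ge_n; apply: IH; have := ne j; lia.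
Qed.

Lemma infconcat_wcat X : (forall j, 0 < size (X j)) ->
  infconcat X = wcat (X 0) (infconcat (shift X 1)).
Proof.
move=> ne; apply: functional_extensionality => n.
rewrite /infconcat /wcat [cat_aux n.+1 _ _ _]/=.
case: ltnP => [lt_n | ge_n]; first exact: set_nth_default.
rewrite nth_default // -(cat_aux_shift _ _ 1 0); apply: cat_aux_fuel => //.
have := ne 0; lia.
Qed.

Lemma pos0 X : pos X 0 = 0.
Proof. by rewrite /pos big_ord0. Qed.

Lemma posS X j : pos X j.+1 = pos X j + size (X j).
Proof. by rewrite /pos big_ord_recr. Qed.

Section InfiniteConcatenation.
Variable X : nat -> seq nat.
Hypothesis X_nonempty : forall j, 0 < size (X j).

Lemma infconcat_shiftS j : infconcat (shift X j) = wcat (X j) (infconcat (shift X j.+1)).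
Proof.
rewrite infconcat_wcat => [|i]; last exact: X_nonempty.
congr (wcat _ (infconcat _)); apply: functional_extensionality => i.
by rewrite /shift -addnA add1n.
Qed.

Lemma infconcat_pos j : (fun i => infconcat X (pos X j + i)) = infconcat (shift X j).
Proof.
elim: j => [|j IH].
  rewrite pos0; congr infconcat.
  by apply: functional_extensionality => i; rewrite /shift addn0.
apply: functional_extensionality => i.
rewrite posS -addnA (congr1 (fun f => f (size (X j) + i)) IH).
by rewrite infconcat_shiftS wcat_drop.
Qed.

Lemma infconcat_block j i : i < size (X j) -> infconcat X (pos X j + i) = nth 0 (X j) i.
Proof.
move=> lt_i; rewrite (congr1 (fun f => f i) (infconcat_pos j)) infconcat_shiftS.
by symmetry; apply: prefix_wcat.
Qed.

Lemma pos_ge j : j <= pos X j.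
Proof. by elim: j => [|j IH]; rewrite ?pos0 // posS; have := X_nonempty j; lia. Qed.

Lemma pos_cover n : exists j i, i < size (X j) /\ n = pos X j + i.
Proof.
elim: n => [|n [j [i [lt_i ->]]]]; first by exists 0, 0; rewrite pos0.
case: (ltnP i.+1 (size (X j))) => [lt_i1 | ge_i1]; first by exists j, i.+1; rewrite addnS.
by exists j.+1, 0; rewrite posS; split; [exact: X_nonempty | lia].
Qed.

End InfiniteConcatenation.

Lemma infconcat_const Z a : (forall j, Z j = [:: a]) -> forall n, infconcat Z n = a.
Proof.
move=> Za n; elim: n Z Za => [|n IH] Z Za;
  (rewrite infconcat_wcat => [|j]; last by rewrite Za); rewrite Za //.
by rewrite -[n.+1]/(size [:: a] + n) wcat_drop; apply: IH => j; apply: Za.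
Qed.

Section Decompositions.
Variables (N kappa gamma : nat) (P : pred (seq nat)).
Hypotheses (P_nonempty : forall w, P w -> 0 < size w)
  (P_letter : forall a, inSigma N a -> P [:: a])
  (P_last : forall w, P w -> 1 < size w -> last 0 w = gamma)
  (kappa_gamma : kappa <> gamma).

Lemma decomp_unique x X Y : isDecomp P x X -> isDecomp P x Y -> X = Y.
Proof.
move=> dX dY.
have same_block j : pos X j = pos Y j -> X j = Y j.
  move=> e; case: (dX j) (dY j) => PX [preX lgX] [PY [preY lgY]].
  rewrite e in preX lgX.
  have size_eq : size (X j) = size (Y j) by apply/eqP; rewrite eqn_leq lgX ?lgY.
  by apply: (@eq_from_nth _ 0 _ _ size_eq) => i lt_i; rewrite preX // preY // -size_eq.
have pos_eq j : pos X j = pos Y j.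
  by elim: j => [|j IH]; rewrite ?pos0 // !posS IH (same_block _ IH).
by apply: functional_extensionality => j; apply/same_block/pos_eq.
Qed.

Lemma decompE x X : isDecomp P x X -> decomp P x = X.
Proof. by move=> dX; apply: (decomp_unique _ dX); apply: epsilon_spec; exists X. Qed.

Lemma decomp_infconcat x X : isDecomp P x X -> x = infconcat X.
Proof.
move=> dX; have ne j : 0 < size (X j) by case: (dX j) => /P_nonempty.
apply: functional_extensionality => n; have [j [i [lt_i ->]]] := pos_cover ne n.
by case: (dX j) => _ [pre _]; rewrite infconcat_block // pre.
Qed.

Lemma isDecomp_infconcat X : (forall j, P (X j)) ->
  isDecomp P (infconcat X) X <-> forall j, longest P (X j) (infconcat (shift X j)).
Proof.
move=> PX; have ne j : 0 < size (X j) := P_nonempty (PX j).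
split=> [dX j | lg j]; first by rewrite -(infconcat_pos ne j); case: (dX j) => _ [].
move: (lg j); rewrite -(infconcat_pos ne j) => lgj.
by split; [exact: PX | split=> // i lt_i; rewrite infconcat_block].
Qed.

Lemma decomp_exists x K : (forall n, P [:: x n]) ->
  (forall n w, P w -> prefix_of w (fun i => x (n + i)) -> size w <= K) ->
  exists X, isDecomp P x X.
Proof.
move=> P_x bounded.
pose word n l := mkseq (fun i => x (n + i)) l.
have word_prefix n l : prefix_of (word n l) (fun i => x (n + i)).
  by move=> i; rewrite size_mkseq => lt_i; rewrite nth_mkseq.
have prefix_word n w : prefix_of w (fun i => x (n + i)) -> w = word n (size w).
  move=> pre; apply: (@eq_from_nth _ 0) => [|i lt_i]; first by rewrite size_mkseq.
  by rewrite nth_mkseq // pre.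
have ex n : exists l, P (word n l) by exists 1; rewrite /word /mkseq /= addn0.
have ub n l : P (word n l) -> l <= K.
  by move=> Pw; have := bounded _ _ Pw (word_prefix n l); rewrite size_mkseq.
pose len n := ex_maxn (ex n) (ub n).
pose fix start j := if j is j'.+1 then start j' + len (start j') else 0.
exists (fun j => word (start j) (len (start j))).
have pos_start j : pos (fun j => word (start j) (len (start j))) j = start j.
  by elim: j => [|j IH]; rewrite ?pos0 // posS IH size_mkseq.
move=> j; rewrite pos_start /len; case: ex_maxnP => l Pl max_l.
split=> //; split=> [|w Pw /prefix_word ew]; first exact: word_prefix.
by rewrite size_mkseq max_l // -ew.
Qed.

Lemma decomp_Omega x : inOmega N kappa x -> exists X, isDecomp P x X.
Proof.
case=> x_Sigma [n0 x_kappa]; apply: (decomp_exists (K := n0.+1)) => [n | n w Pw pre].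
  exact: P_letter.
rewrite leqNgt; apply/negP => long.
have last_x : last 0 w = x (n + (size w).-1) by rewrite -nth_last pre //; lia.
by apply: kappa_gamma; rewrite -(x_kappa (n + (size w).-1)) -?last_x ?P_last //; lia.
Qed.

Lemma decomp_Omega_kappa x X : inOmega N kappa x -> isDecomp P x X ->
  exists J, forall j, J <= j -> X j = [:: kappa].
Proof.
case=> _ [n0 x_kappa] dX; exists n0 => j le_j.
have ne j' : 0 < size (X j') by case: (dX j') => /P_nonempty.
case: (dX j) => PX [pre _].
have block_kappa i : i < size (X j) -> nth 0 (X j) i = kappa.
  by move=> lt_i; rewrite pre // x_kappa //; have := pos_ge ne j; lia.
case: (ltnP 1 (size (X j))) => [lt1 | le1].
  by case: kappa_gamma; rewrite -(P_last PX lt1) -nth_last block_kappa //; lia.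
apply: (@eq_from_nth _ 0) => [|i lt_i]; first by have := ne j; rewrite /=; lia.
by rewrite block_kappa //; have -> : i = 0 by lia.
Qed.

Lemma inOmega_infconcat Y : (forall j, 0 < size (Y j)) -> (forall j, all (inSigma N) (Y j)) ->
  (exists J, forall j, J <= j -> Y j = [:: kappa]) -> inOmega N kappa (infconcat Y).
Proof.
move=> ne Y_Sigma [J YJ]; split=> [n | ].
  have [j [i [lt_i ->]]] := pos_cover ne n; rewrite infconcat_block //.
  exact/(allP (Y_Sigma j))/mem_nth.
exists (pos Y J) => m le_m; rewrite -(subnKC le_m).
rewrite (congr1 (fun f => f (m - pos Y J)) (infconcat_pos ne J)).
by apply: infconcat_const => j; apply: YJ; rewrite leq_addl.
Qed.

End Decompositions.

Lemma nat_eqF (a b : nat) : a <> b -> (a == b) = false.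
Proof. by move=> ne; apply/eqP. Qed.

Section Blocks.
Variables (N tau kappa alpha gamma : nat).
Hypotheses (tau_Sigma : inSigma N tau) (kappa_Sigma : inSigma N kappa)
  (alpha_Sigma : inSigma N alpha) (gamma_Sigma : inSigma N gamma).
Hypotheses (tau_kappa : tau <> kappa) (tau_gamma : tau <> gamma)
  (kappa_alpha : kappa <> alpha) (kappa_gamma : kappa <> gamma) (alpha_gamma : alpha <> gamma).

Local Notation M := (inCMS N tau kappa alpha gamma).
Local Notation M' := (inCM'S N tau kappa alpha gamma).
Local Notation G0 := (g0 tau kappa alpha gamma).
Local Notation G0inv := (g0inv tau kappa alpha gamma).

Definition tauGam k := tau :: nseq k gamma.
Definition akg m := nseq m alpha ++ [:: kappa; gamma].
Definition kakg k := kappa :: akg k.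
Definition kakgg k := kakg k ++ [:: gamma].

Lemma size_tauGam k : size (tauGam k) = k.+1.
Proof. by rewrite /= size_nseq. Qed.

Lemma size_akg m : size (akg m) = m.+2.
Proof. by rewrite size_cat size_nseq addn2. Qed.

Lemma size_kakg k : size (kakg k) = k.+3.
Proof. by rewrite /= size_cat size_nseq addn2. Qed.

Lemma size_kakgg k : size (kakgg k) = k.+4.
Proof. by rewrite size_cat size_kakg addn1. Qed.

Lemma tauGamS k : tauGam k ++ [:: gamma] = tauGam k.+1.
Proof. by rewrite /tauGam cat_cons -[[:: gamma]]/(nseq 1 gamma) -nseqD addn1. Qed.

Lemma kakggE k : kakgg k = kappa :: nseq k alpha ++ [:: kappa; gamma; gamma].
Proof. by rewrite /kakgg /kakg /akg cat_cons -catA. Qed.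

Variant inCMS_spec : seq nat -> Prop :=
  | TauGamM k of 2 <= k : inCMS_spec (tauGam k)
  | KakgM k : inCMS_spec (kakg k)
  | LetterM a of inSigma N a : inCMS_spec [:: a].

Variant inCM'S_spec : seq nat -> Prop :=
  | KakgM' k : inCM'S_spec (kakg k)
  | KakggM' k : inCM'S_spec (kakgg k)
  | TggM' : inCM'S_spec (tauGam 2)
  | LetterM' a of inSigma N a : inCM'S_spec [:: a].

Lemma inCMSP w : M w -> inCMS_spec w.
Proof.
rewrite /inCMS /isTauGam /isKAKG /isLetter; case/orP => [/orP[] |].
- case: w => [|a t] // /andP[/andP[/eqP -> le2] /all_pred1P e].
  by rewrite e; exact: TauGamM.
- by case/andP => _ /eqP ->; exact: KakgM.
- by case: w => [|a [|]] // /andP[_ /andP[aS _]]; exact: LetterM.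
Qed.

Lemma inCM'SP w : M' w -> inCM'S_spec w.
Proof.
rewrite /inCM'S /isKAKG /isKAKGG /isLetter; case/orP => [/orP[/orP[] |] |].
- by case/andP => _ /eqP ->; exact: KakgM'.
- by case/andP => _ /eqP ->; rewrite -kakggE; exact: KakggM'.
- by move/eqP ->; exact: TggM'.
- by case: w => [|a [|]] // /andP[_ /andP[aS _]]; exact: LetterM'.
Qed.

Lemma isTauGam_tauGam k : 2 <= k -> isTauGam tau gamma (tauGam k).
Proof. by move=> le2; rewrite /isTauGam /tauGam eqxx size_nseq le2 all_pred1_nseq. Qed.

Lemma isTauGam_kakg k : isTauGam tau gamma (kakg k) = false.
Proof. by rewrite /isTauGam /kakg (nat_eqF (nesym tau_kappa)). Qed.

Lemma isTauGam_letter a : isTauGam tau gamma [:: a] = false.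
Proof. by rewrite /isTauGam andbF. Qed.

Lemma nth_akg_lt m i : i < m -> nth 0 (akg m) i = alpha.
Proof. by move=> lt_i; rewrite nth_cat size_nseq lt_i nth_nseq lt_i. Qed.

Lemma nth_akg m : nth 0 (akg m) m = kappa.
Proof. by rewrite nth_cat size_nseq ltnn subnn. Qed.

Lemma isKAKG_kakg k : isKAKG kappa alpha gamma (kakg k).
Proof. by rewrite /isKAKG size_kakg !subSS subn0 /=; apply/eqP. Qed.

Lemma isKAKG_tauGam k : isKAKG kappa alpha gamma (tauGam k) = false.
Proof. by rewrite /isKAKG eqseq_cons (nat_eqF tau_kappa) andbF. Qed.

Lemma isKAKG_kakgg k : isKAKG kappa alpha gamma (kakgg k) = false.
Proof.
apply/negbTE/negP => /andP[_ /eqP]; rewrite size_kakgg !subSS subn0.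
move/(congr1 (nth 0 ^~ k.+1)) => /=.
have lt_k : k < size (akg k) by rewrite size_akg.
by rewrite -[alpha :: _]/(akg k.+1) nth_akg_lt // nth_cat lt_k nth_akg.
Qed.

Lemma isKAKGG_kakgg k : isKAKGG kappa alpha gamma (kakgg k).
Proof. by rewrite /isKAKGG size_kakgg !subSS subn0 kakggE /=; apply/eqP. Qed.

Lemma g0_tauGam k : 2 <= k -> G0 (tauGam k) = kakg (k - 2).
Proof. by move=> le2; rewrite /g0 isTauGam_tauGam // size_tauGam subSS. Qed.

Lemma g0_kakg k : G0 (kakg k) = if k is k'.+1 then kakgg k' else tauGam 2.
Proof.
rewrite /g0 isTauGam_kakg isKAKG_kakg size_kakg !subSS subn0.
by case: k => [|k] //=; rewrite subn1 kakggE.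
Qed.

Lemma g0_letter a : G0 [:: a] = [:: a].
Proof. by rewrite /g0 isTauGam_letter. Qed.

Lemma g0inv_kakg k : G0inv (kakg k) = tauGam k.+2.
Proof. by rewrite /g0inv isKAKG_kakg size_kakg !subSS subn0. Qed.

Lemma g0inv_kakgg k : G0inv (kakgg k) = kakg k.+1.
Proof. by rewrite /g0inv isKAKG_kakgg isKAKGG_kakgg size_kakgg !subSS subn0. Qed.

Lemma g0inv_tgg : G0inv (tauGam 2) = kakg 0.
Proof. by rewrite /g0inv isKAKG_tauGam eqxx. Qed.

Lemma g0inv_letter a : G0inv [:: a] = [:: a].
Proof. by rewrite /g0inv eqseq_cons andbF. Qed.

Lemma inCMS_tauGam k : 2 <= k -> M (tauGam k).
Proof. by move=> le2; rewrite /inCMS isTauGam_tauGam. Qed.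

Lemma inCMS_kakg k : M (kakg k).
Proof. by rewrite /inCMS isKAKG_kakg orbT. Qed.

Lemma inCMS_letter a : inSigma N a -> M [:: a].
Proof. by move=> aS; rewrite /inCMS /isLetter /= aS orbT. Qed.

Lemma inCM'S_kakg k : M' (kakg k).
Proof. by rewrite /inCM'S isKAKG_kakg. Qed.

Lemma inCM'S_kakgg k : M' (kakgg k).
Proof. by rewrite /inCM'S isKAKGG_kakgg orbT. Qed.

Lemma inCM'S_tgg : M' (tauGam 2).
Proof. by rewrite /inCM'S eqxx !orbT. Qed.

Lemma inCM'S_letter a : inSigma N a -> M' [:: a].
Proof. by move=> aS; rewrite /inCM'S /isLetter /= aS !orbT. Qed.

Lemma g0_inCM'S B : M B -> M' (G0 B).
Proof.
case/inCMSP => [k le2 | [|k] | a aS]; rewrite ?g0_tauGam ?g0_kakg ?g0_letter //.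
- exact: inCM'S_kakg.
- exact: inCM'S_tgg.
- exact: inCM'S_kakgg.
- exact: inCM'S_letter.
Qed.

Lemma g0inv_inCMS U : M' U -> M (G0inv U).
Proof.
case/inCM'SP => [k | k | | a aS].
- by rewrite g0inv_kakg inCMS_tauGam.
- by rewrite g0inv_kakgg inCMS_kakg.
- by rewrite g0inv_tgg inCMS_kakg.
- by rewrite g0inv_letter inCMS_letter.
Qed.

Lemma g0K B : M B -> G0inv (G0 B) = B.
Proof.
case/inCMSP => [k le2 | [|k] | a _].
- by rewrite g0_tauGam // g0inv_kakg -addn2 subnK.
- by rewrite g0_kakg g0inv_tgg.
- by rewrite g0_kakg g0inv_kakgg.
- by rewrite g0_letter g0inv_letter.
Qed.

Lemma g0invK U : M' U -> G0 (G0inv U) = U.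
Proof.
case/inCM'SP => [k | k | | a _].
- by rewrite g0inv_kakg g0_tauGam // subn2.
- by rewrite g0inv_kakgg g0_kakg.
- by rewrite g0inv_tgg g0_kakg.
- by rewrite g0inv_letter g0_letter.
Qed.

Lemma size_g0 B : M B -> size (G0 B) = size B.
Proof.
case/inCMSP => [k le2 | [|k] | a _]; rewrite ?g0_tauGam ?g0_kakg ?g0_letter //.
- by rewrite size_kakg size_tauGam; lia.
- by rewrite size_kakgg size_kakg.
Qed.

Lemma isKAKG_g0 B : M B -> isKAKG kappa alpha gamma (G0 B) = isTauGam tau gamma B.
Proof.
case/inCMSP => [k le2 | [|k] | a _].
- by rewrite g0_tauGam // isKAKG_kakg isTauGam_tauGam.
- by rewrite g0_kakg isKAKG_tauGam isTauGam_kakg.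
- by rewrite g0_kakg isKAKG_kakgg isTauGam_kakg.
- by rewrite g0_letter isTauGam_letter.
Qed.

Lemma inCMS_size B : M B -> 0 < size B.
Proof. by case/inCMSP => [k _ | k | a _]; rewrite ?size_tauGam ?size_kakg. Qed.

Lemma inCM'S_size B : M' B -> 0 < size B.
Proof. by case/inCM'SP => [k | k | | a _]; rewrite ?size_kakg ?size_kakgg. Qed.

Lemma all_inSigma_kakg k : all (inSigma N) (kakg k).
Proof. by rewrite /= kappa_Sigma all_cat all_nseq alpha_Sigma orbT /= kappa_Sigma gamma_Sigma. Qed.

Lemma inCMS_Sigma B : M B -> all (inSigma N) B.
Proof.
case/inCMSP => [k _ | k | a aS]; last by rewrite /= aS.
- by rewrite /= tau_Sigma all_nseq gamma_Sigma orbT.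
- exact: all_inSigma_kakg.
Qed.

Lemma inCM'S_Sigma B : M' B -> all (inSigma N) B.
Proof.
case/inCM'SP => [k | k | | a aS]; last by rewrite /= aS.
- exact: all_inSigma_kakg.
- by rewrite all_cat all_inSigma_kakg /= gamma_Sigma.
- by rewrite /= tau_Sigma gamma_Sigma.
Qed.

Lemma last_kakg k : last 0 (kakg k) = gamma.
Proof. by rewrite /= last_cat. Qed.

Lemma inCMS_last B : M B -> 1 < size B -> last 0 B = gamma.
Proof.
case/inCMSP => [[|k] _ | k | a _] //; last by rewrite last_kakg.
by rewrite -tauGamS last_cat.
Qed.

Lemma inCM'S_last B : M' B -> 1 < size B -> last 0 B = gamma.
Proof. by case/inCM'SP => [k | k | | a _] //; rewrite ?last_kakg // last_cat. Qed.

Lemma prefix_tauGam k t :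
  prefix_of (tauGam k) t <-> t 0 = tau /\ forall i, i < k -> t i.+1 = gamma.
Proof.
split=> [/(prefix_cat [:: tau] (nseq k gamma) t) [/prefix_letter t0 /prefix_nseq tg] // | [t0 tg]].
by apply/(prefix_cat [:: tau] (nseq k gamma) t); split; [exact/prefix_letter | exact/prefix_nseq].
Qed.

Lemma akg_unique m m' s : prefix_of (akg m) s -> prefix_of (akg m') s -> m = m'.
Proof.
wlog lt_m : m m' / m < m'.
  move=> wl p p'; case: (ltngtP m m') => [lt | lt | //]; first exact: wl.
  by apply/esym; exact: wl.
move=> p p'; case: kappa_alpha.
by rewrite -(nth_akg m) -(nth_akg_lt lt_m) p ?p' ?size_akg //; lia.
Qed.

Lemma kakg_unique k k' t : prefix_of (kakg k) t -> prefix_of (kakg k') t -> k = k'.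
Proof.
move=> /(prefix_cat [:: kappa] (akg k) t) [_ p] /(prefix_cat [:: kappa] (akg k') t) [_ p'].
exact: akg_unique p p'.
Qed.

Lemma prefix_kakgg k t : prefix_of (kakgg k) t -> prefix_of (kakg k) t /\ t k.+3 = gamma.
Proof.
by move=> /prefix_cat [pk /prefix_letter]; rewrite size_kakg addn0.
Qed.

Definition lookahead (v : seq nat) : Prop :=
  [\/ v = [:: gamma], v = [:: gamma; gamma] | exists m, v = akg m].

Lemma lookahead_behead a v : lookahead (a :: v) -> v = [::] \/ lookahead v.
Proof.
case=> [[_ ->] | [_ ->] | [[|m] /= [_ ->]]]; [by left | by right; apply: Or31 .. | ].
by right; apply: Or33; exists m.
Qed.

Definition long_head (B : seq nat) : Prop :=
  1 < size B /\
  (nth 0 B 0 = tau /\ nth 0 B 1 = gamma \/ nth 0 B 0 = kappa /\ nth 0 B 1 <> gamma).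

Lemma long_head_kakg k : long_head (kakg k).
Proof. by split; [rewrite size_kakg | right; case: k]. Qed.

Lemma long_head_kakgg k : long_head (kakgg k).
Proof. by split; [rewrite size_kakgg | right; case: k]. Qed.

Lemma long_head_tauGam k : 0 < k -> long_head (tauGam k).
Proof. by case: k => // k _; split; [rewrite size_tauGam | left]. Qed.

Lemma inCMS_long B : M B -> 1 < size B -> long_head B.
Proof.
case/inCMSP => [k le2 _ | k _ | a _] //; last exact: long_head_kakg.
by apply: long_head_tauGam; lia.
Qed.

Lemma inCM'S_long B : M' B -> 1 < size B -> long_head B.
Proof.
case/inCM'SP => [k | k | | a _] _ //.
- exact: long_head_kakg.
- exact: long_head_kakgg.
- exact: long_head_tauGam.
Qed.

Lemma long_head_clash B v t :
  long_head B -> lookahead v -> prefix_of B t -> prefix_of v t -> False.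
Proof.
(* [v] disagrees with [tau gamma] and with [kappa c], [c <> gamma], in its first two letters. *)
move=> [lt1 head] look_v pB pv.
have B0 := pB 0 (ltnW lt1); have B1 := pB 1 lt1.
case: look_v pv => [-> | -> | [[|[|m]] ->]] pv; have v0 := pv 0 isT;
  try have v1 := pv 1 isT; simpl in *; case: head => -[h0 h1]; congruence.
Qed.

Lemma prefix_infconcat_g0 v Z : lookahead v -> (forall j, M (Z j)) ->
  prefix_of v (infconcat Z) <-> prefix_of v (infconcat (fun j => G0 (Z j))).
Proof.
elim: v Z => [|a v IH] Z look_v MZ; first by split=> _ i.
have MZ' j : M' (G0 (Z j)) := g0_inCM'S (MZ j).
rewrite (infconcat_wcat (fun j => inCMS_size (MZ j))).
rewrite (infconcat_wcat (fun j => inCM'S_size (MZ' j))).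
case: (ltnP 1 (size (Z 0))) => [long | short].
  have long' : 1 < size (G0 (Z 0)) by rewrite size_g0.
  split=> pv; exfalso.
    exact: long_head_clash (inCMS_long (MZ 0) long) look_v (prefix_wcat _) pv.
  exact: long_head_clash (inCM'S_long (MZ' 0) long') look_v (prefix_wcat _) pv.
case/inCMSP: (MZ 0) short => [k le2 | k | b _] short.
- by rewrite size_tauGam in short; lia.
- by rewrite size_kakg in short.
rewrite g0_letter !prefix_wcat_letter.
case: (lookahead_behead look_v) => [-> | look_v']; first by split=> -[-> _]; split.
by split=> -[-> pv]; split=> //; apply/(IH (shift Z 1) look_v' (fun j => MZ _)).
Qed.

Definition endsM (B : seq nat) (s : nat -> nat) : Prop :=
  [/\ isTauGam tau gamma B -> ~ prefix_of [:: gamma] s,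
      B = [:: tau] -> ~ prefix_of [:: gamma; gamma] s &
      B = [:: kappa] -> forall m, ~ prefix_of (akg m) s].

Definition endsM' (B : seq nat) (s : nat -> nat) : Prop :=
  [/\ isKAKG kappa alpha gamma B -> ~ prefix_of [:: gamma] s,
      B = [:: tau] -> ~ prefix_of [:: gamma; gamma] s &
      B = [:: kappa] -> forall m, ~ prefix_of (akg m) s].

Lemma prefix_gamma2 k s : 2 <= k -> prefix_of (nseq k gamma) s -> prefix_of [:: gamma; gamma] s.
Proof. by move=> le2 /prefix_nseq sg; apply/(prefix_nseq 2) => i lt_i; apply: sg; lia. Qed.

Lemma longest_endsM B s : M B -> longest M B (wcat B s) -> endsM B s.
Proof.
move=> MB lg; split=> [tgB pv | eB pv | eB m pv]; last 2 first.
- by rewrite eB in lg; have := longest_ext lg (inCMS_tauGam (leqnn 2)) pv.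
- by rewrite eB in lg; move/(congr1 size): (longest_ext lg (inCMS_kakg m) pv); rewrite size_akg.
case/inCMSP: MB tgB lg => [k le2 | k | a _]; rewrite ?isTauGam_kakg ?isTauGam_letter // => _ lg.
have Mext : M (tauGam k ++ [:: gamma]) by rewrite tauGamS inCMS_tauGam //; lia.
by have := longest_ext lg Mext pv.
Qed.

Lemma longest_endsM' B s : M' B -> longest M' B (wcat B s) -> endsM' B s.
Proof.
move=> MB lg; split=> [kB pv | eB pv | eB m pv]; last 2 first.
- by rewrite eB in lg; have := longest_ext lg inCM'S_tgg pv.
- by rewrite eB in lg; move/(congr1 size): (longest_ext lg (inCM'S_kakg m) pv); rewrite size_akg.
case/inCM'SP: MB kB lg => [k | k | | a _]; rewrite ?isKAKG_kakgg ?isKAKG_tauGam // => _ lg.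
by have := longest_ext lg (inCM'S_kakgg k) pv.
Qed.

Lemma endsM_longest B s : M B -> endsM B s -> longest M B (wcat B s).
Proof.
move=> MB [stop1 stop2 stop3] w Mw pw; rewrite leqNgt; apply/negP => longer.
have pB := @prefix_wcat B s.
have w_long : 1 < size w by have := inCMS_size MB; lia.
case/inCMSP: Mw pw longer w_long => [k' le2' | k' | b _ _ _ //] pw longer _;
  case/inCMSP: MB stop1 stop2 stop3 pB pw longer
    => [k le2 | k | a _] stop1 stop2 stop3 pB pw longer.
- have [_ tg] := (prefix_tauGam _ _).1 pw; rewrite !size_tauGam in longer.
  apply: (stop1 (isTauGam_tauGam le2)); apply/prefix_letter.
  by rewrite -(wcat_drop (tauGam k)) size_tauGam addn0 tg.
- by have := pw 0 isT => /tau_kappa.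
- by case/prefix_wcat_letter: pw => ta /(prefix_gamma2 le2'); apply: stop2; rewrite ta.
- by have := pw 0 isT => /esym /tau_kappa.
- by move: longer; rewrite (kakg_unique pw pB) ltnn.
- by case/prefix_wcat_letter: pw => ka; apply: stop3; rewrite ka.
Qed.

Lemma endsM'_longest B s : M' B -> endsM' B s -> longest M' B (wcat B s).
Proof.
move=> MB [stop1 stop2 stop3] w Mw pw; rewrite leqNgt; apply/negP => longer.
have pB := @prefix_wcat B s.
have w_long : 1 < size w by have := inCM'S_size MB; lia.
case/inCM'SP: Mw pw longer w_long => [k' | k' | | b _ _ _ //] pw longer _;
  case/inCM'SP: MB stop1 stop2 stop3 pB pw longer
    => [k | k | | a _] stop1 stop2 stop3 pB pw longer.
- by move: longer; rewrite (kakg_unique pw pB) ltnn.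
- move: longer; rewrite (kakg_unique pw (prefix_kakgg pB).1) size_kakg size_kakgg; lia.
- by have := pw 0 isT => /esym /tau_kappa.
- by case/prefix_wcat_letter: pw => ka; apply: stop3; rewrite ka.
- have [pk gk] := prefix_kakgg pw; rewrite (kakg_unique pk pB) in gk.
  apply: (stop1 (isKAKG_kakg k)); apply/prefix_letter.
  by rewrite -(wcat_drop (kakg k)) size_kakg addn0.
- by move: longer; rewrite (kakg_unique (prefix_kakgg pw).1 (prefix_kakgg pB).1) ltnn.
- by have := pw 0 isT => /esym /tau_kappa.
- case/prefix_wcat_letter: pw => ka /prefix_cat [pk _].
  by apply: (stop3 _ k'); rewrite ?ka.
- by have := pw 0 isT => /tau_kappa.
- by have := pw 0 isT => /tau_kappa.
- by rewrite ltnn in longer.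
- by case/prefix_wcat_letter: pw => ta; apply: stop2; rewrite ta.
Qed.

Lemma endsM_g0 B Z : M B -> (forall j, M (Z j)) ->
  endsM B (infconcat Z) <-> endsM' (G0 B) (infconcat (fun j => G0 (Z j))).
Proof.
move=> MB MZ; rewrite /endsM /endsM' isKAKG_g0 //.
have transfer v (look_v : lookahead v) := prefix_infconcat_g0 look_v MZ.
have look_gamma : lookahead [:: gamma] by apply: Or31.
have look_gamma2 : lookahead [:: gamma; gamma] by apply: Or32.
have look_akg m : lookahead (akg m) by apply: Or33; exists m.
have letter c : G0 B = [:: c] <-> B = [:: c].
  case/inCMSP: MB => [k le2 | [|k] | a _]; rewrite ?g0_tauGam ?g0_kakg ?g0_letter //;
    split=> e; exfalso; move: (congr1 size e); rewrite ?size_kakg ?size_kakgg ?size_tauGam /=; lia.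
split=> -[stop1 stop2 stop3]; split.
- by move=> tgB /(transfer _ look_gamma); apply: stop1.
- by move=> /letter eB /(transfer _ look_gamma2); apply: stop2.
- by move=> /letter eB m /(transfer _ (look_akg m)); apply: stop3.
- by move=> tgB /(transfer _ look_gamma); apply: stop1.
- by move=> /letter eB /(transfer _ look_gamma2); apply: stop2.
- by move=> /letter eB m /(transfer _ (look_akg m)); apply: stop3.
Qed.

Lemma longest_g0 Z : (forall j, M (Z j)) ->
  longest M (Z 0) (infconcat Z) <-> longest M' (G0 (Z 0)) (infconcat (fun j => G0 (Z j))).
Proof.
move=> MZ; have MZ' j : M' (G0 (Z j)) := g0_inCM'S (MZ j).
rewrite (infconcat_wcat (fun j => inCMS_size (MZ j))).
rewrite (infconcat_wcat (fun j => inCM'S_size (MZ' j))).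
have ends := endsM_g0 (MZ 0) (fun j => MZ (j + 1)).
split=> [/(longest_endsM (MZ 0)) | /(longest_endsM' (MZ' 0))] /ends.
  exact: endsM'_longest.
exact: endsM_longest.
Qed.

Lemma decomp_g0_iff X : (forall j, M (X j)) ->
  isDecomp M (infconcat X) X <->
  isDecomp M' (infconcat (fun j => G0 (X j))) (fun j => G0 (X j)).
Proof.
move=> MX; have MX' j : M' (G0 (X j)) := g0_inCM'S (MX j).
have longest_j j := longest_g0 (fun i => MX (i + j)).
split=> [/(isDecomp_infconcat inCMS_size MX) lg | /(isDecomp_infconcat inCM'S_size MX') lg].
  by apply/(isDecomp_infconcat inCM'S_size MX') => j; apply/longest_j.
by apply/(isDecomp_infconcat inCMS_size MX) => j; apply/longest_j.
Qed.

Lemma decomp_g0 x X : isDecomp M x X ->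
  isDecomp M' (infconcat (fun j => G0 (X j))) (fun j => G0 (X j)).
Proof.
move=> dX; have MX j : M (X j) by case: (dX j).
by apply/decomp_g0_iff; rewrite // -(decomp_infconcat inCMS_size dX).
Qed.

Lemma decomp_g0inv u U : isDecomp M' u U ->
  isDecomp M (infconcat (fun j => G0inv (U j))) (fun j => G0inv (U j)).
Proof.
move=> dU; have MU j : M' (U j) by case: (dU j).
apply/decomp_g0_iff => [j | ]; first exact: g0inv_inCMS.
have -> : (fun j => G0 (G0inv (U j))) = U.
  by apply: functional_extensionality => j; apply: g0invK.
by rewrite -(decomp_infconcat inCM'S_size dU).
Qed.

Local Notation G := (g N tau kappa alpha gamma).

Lemma g_decomp x X : isDecomp M x X -> G x = infconcat (fun j => G0 (X j)).
Proof. by move=> dX; rewrite /g (decompE dX). Qed.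

Lemma g_inOmega x : inOmega N kappa x -> inOmega N kappa (G x).
Proof.
move=> Ox; have [X dX] := decomp_Omega inCMS_letter inCMS_last kappa_gamma Ox.
have MX j : M (X j) by case: (dX j).
rewrite (g_decomp dX); apply: inOmega_infconcat => [j | j |].
- exact/inCM'S_size/g0_inCM'S.
- exact/inCM'S_Sigma/g0_inCM'S.
have [J XJ] := decomp_Omega_kappa inCMS_size inCMS_last kappa_gamma Ox dX.
by exists J => j /XJ ->; rewrite g0_letter.
Qed.

Lemma g_injective x y : inOmega N kappa x -> inOmega N kappa y -> G x = G y -> x = y.
Proof.
move=> Ox Oy gxy.
have [X dX] := decomp_Omega inCMS_letter inCMS_last kappa_gamma Ox.
have [Y dY] := decomp_Omega inCMS_letter inCMS_last kappa_gamma Oy.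
have G0XY : (fun j => G0 (X j)) = (fun j => G0 (Y j)).
  apply: (decomp_unique (decomp_g0 dX)).
  by rewrite -(g_decomp dX) gxy (g_decomp dY); exact: decomp_g0 dY.
rewrite (decomp_infconcat inCMS_size dX) (decomp_infconcat inCMS_size dY); congr infconcat.
apply: functional_extensionality => j.
have := congr1 (fun f => G0inv (f j)) G0XY => /=.
by rewrite !g0K //; [case: (dY j) | case: (dX j)].
Qed.

Lemma g_surjective u : inOmega N kappa u -> exists x, inOmega N kappa x /\ G x = u.
Proof.
move=> Ou; have [U dU] := decomp_Omega inCM'S_letter inCM'S_last kappa_gamma Ou.
have MX j : M (G0inv (U j)) by apply: g0inv_inCMS; case: (dU j).
exists (infconcat (fun j => G0inv (U j))); split.
  apply: inOmega_infconcat => [j | j |]; [exact: inCMS_size | exact: inCMS_Sigma |].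
  have [J UJ] := decomp_Omega_kappa inCM'S_size inCM'S_last kappa_gamma Ou dU.
  by exists J => j /UJ ->; rewrite g0inv_letter.
rewrite (g_decomp (decomp_g0inv dU)) (decomp_infconcat inCM'S_size dU); congr infconcat.
by apply: functional_extensionality => j; apply: g0invK; case: (dU j).
Qed.

End Blocks.

Theorem proposition7p1 (N tau kappa alpha gamma : nat) :
  4 <= N ->
  inSigma N tau -> inSigma N kappa -> inSigma N alpha -> inSigma N gamma ->
  tau <> kappa -> tau <> gamma -> kappa <> alpha -> kappa <> gamma -> alpha <> gamma ->
  (* (i) *)
  (forall x, inOmega N kappa x ->
     forall X, isDecomp (inCMS N tau kappa alpha gamma) x X ->
       isDecomp (inCM'S N tau kappa alpha gamma) (g N tau kappa alpha gamma x)
                (fun j => g0 tau kappa alpha gamma (X j))) /\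
  (* (ii) *)
  (forall u, inOmega N kappa u ->
     forall U, isDecomp (inCM'S N tau kappa alpha gamma) u U ->
       isDecomp (inCMS N tau kappa alpha gamma)
                (infconcat (fun j => g0inv tau kappa alpha gamma (U j)))
                (fun j => g0inv tau kappa alpha gamma (U j))) /\
  (* (iii) g : Omega -> Omega is a bijection *)
  ((forall x, inOmega N kappa x -> inOmega N kappa (g N tau kappa alpha gamma x)) /\
   (forall x y, inOmega N kappa x -> inOmega N kappa y ->
      g N tau kappa alpha gamma x = g N tau kappa alpha gamma y -> x = y) /\
   (forall u, inOmega N kappa u ->
      exists x, inOmega N kappa x /\ g N tau kappa alpha gamma x = u)).
Proof.
move=> _ tau_Sigma kappa_Sigma alpha_Sigma gamma_Sigma tk tg ka kg ag.
split; first by move=> x _ X dX; rewrite (g_decomp dX); exact: decomp_g0 dX.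
split; first by move=> u _ U; exact: decomp_g0inv.
split; first exact: g_inOmega.
by split; [exact: g_injective | exact: g_surjective].
Qed.
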